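(* Let $0<\delta\le 1/2$. Let $A\subset\mathbb{R}^d$ be a finite nonempty set and $C\subset\mathbb{R}^d$ a finite nonempty set of centers. For $a\in A$ let $D(a) = \min_{c\in C}\|a-c\|$, and let $\mathcal{D}: A\to\mathbb{R}_{\ge0}$ satisfy $(1-\delta)D(a)\le\mathcal D(a)\le(1+\delta)D(a)$ for all $a\in A$, with $\sum_{a\in A}\mathcal D(a)^2>0$. Let $c$ be a random point of $A$ chosen with $\Pr[c=a_0] = \mathcal D(a_0)^2/\sum_{a\in A}\mathcal D(a)^2$. Then $$\mathbb{E}\big[\mathrm{cost}(A, C\cup\{c\})\big] \le 72\cdot OPT(A).$$
   Context: For a finite set $A$ and center set $C'$, $\mathrm{cost}(A,C') = \sum_{a\in A}\min_{c'\in C'}\|a-c'\|^2$. $OPT(A) = \sum_{a\in A}\|a-\mu(A)\|^2$ where $\mu(A) = \frac1{|A|}\sum_{a\in A}a$ is the centroid (the optimal $1$-means cost of $A$). *)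

From HB Require Import structures.
From mathcomp Require Import all_boot all_order all_algebra.
From mathcomp Require Import reals.
Set Implicit Arguments. Unset Strict Implicit. Unset Printing Implicit Defensive.
Import Order.TTheory GRing.Theory Num.Theory.
Local Open Scope ring_scope.

Section KMeansDefs.
Variables (R : realType) (d : nat).

Definition edist (x y : 'rV[R]_d) : R :=
  Num.sqrt (\sum_(i < d) (x ord0 i - y ord0 i) ^+ 2).

(* minimum of a (nonempty) list of reals; 0 on the empty list (never used) *)
Definition seqmin (s : seq R) : R :=
  if s is x :: s' then foldr Num.min x s' else 0.

Definition Dist (C : seq 'rV[R]_d) (a : 'rV[R]_d) : R :=
  seqmin [seq edist a c | c <- C].

Definition cost (A C' : seq 'rV[R]_d) : R :=
  \sum_(a <- A) seqmin [seq edist a c ^+ 2 | c <- C'].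

Definition centroid (A : seq 'rV[R]_d) : 'rV[R]_d :=
  (size A)%:R^-1 *: \sum_(a <- A) a.

Definition OPT (A : seq 'rV[R]_d) : R :=
  \sum_(a <- A) edist a (centroid A) ^+ 2.

End KMeansDefs.

(** For a sampled point [a0], [cost(A, C ∪ {a0})] is at most both
    [T = Σ_a D(a)^2] and [P(a0) = Σ_a ||a - a0||^2], while averaging the
    relaxed triangle inequality [D(a0)^2 <= 2||a - a0||^2 + 2 D(a)^2] over [a]
    gives [n D(a0)^2 <= 2 P(a0) + 2 T].  Since [D] and the approximation [Dt]
    agree up to a factor [3/2], the sampling weight of [a0] is at most
    [9 D(a0)^2 / T], so the contribution of [a0] is at most
    [9 D(a0)^2 min(T, P(a0)) / T <= 36 P(a0) / n].  Finally
    [Σ_a0 P(a0) = 2 n OPT(A)], because [Σ_a ||a - z||^2 = OPT(A) + n||μ - z||^2]. *)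
From HB Require Import structures.
From mathcomp Require Import all_boot all_order all_algebra.
From mathcomp Require Import reals.
From mathcomp Require Import lra ring.
Import Order.TTheory GRing.Theory Num.Theory.
Set Implicit Arguments. Unset Strict Implicit.
Local Open Scope ring_scope.

Lemma sumr_const_seq (R : nmodType) (T : Type) (s : seq T) (x : R) :
  \sum_(i <- s) x = x *+ size s.
Proof. by rewrite big_const_seq count_predT iter_addr_0. Qed.

Lemma sum_sqr_sub (R : fieldType) (T : Type) (s : seq T) (x : T -> R) (m : R) :
  (size s)%:R != 0 :> R ->
  let mu := (size s)%:R^-1 * \sum_(b <- s) x b in
  \sum_(b <- s) (x b - m) ^+ 2 =
  \sum_(b <- s) (x b - mu) ^+ 2 + (size s)%:R * (mu - m) ^+ 2.
Proof.
move=> n0 mu.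
have center0 : \sum_(b <- s) (x b - mu) = 0.
  by rewrite sumrB sumr_const_seq -mulr_natl /mu mulrA mulfV // mul1r subrr.
rewrite (eq_bigr (fun b => (x b - mu) ^+ 2 + (mu - m) * 2 * (x b - mu)
                           + (mu - m) ^+ 2)); last by move=> b _; ring.
by rewrite !big_split /= -mulr_sumr center0 mulr0 addr0 sumr_const_seq mulr_natl.
Qed.

Section SeqMin.
Variable R : realType.
Implicit Type s : seq R.

Lemma seqmin_mem s : s != [::] -> seqmin s \in s.
Proof.
case: s => // x s _ /=; elim: s => [|y s IH] /=; first by rewrite inE.
rewrite minEle; case: ifP => _; first by rewrite !inE eqxx orbT.
by move: IH; rewrite !inE => /orP[->|->]; rewrite ?orbT.
Qed.

Lemma seqmin_le s y : y \in s -> seqmin s <= y.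
Proof.
case: s => [|x s] //=; elim: s y => [|z s IH] y /=; first by rewrite inE => /eqP ->.
rewrite ge_min !inE => /orP[/eqP->|/orP[/eqP->|ys]].
- by rewrite IH ?orbT // inE eqxx.
- by rewrite lexx.
- by rewrite IH ?orbT // inE ys orbT.
Qed.

End SeqMin.

Section Distances.
Variables (R : realType) (d : nat).
Implicit Types (x y z a c : 'rV[R]_d) (A C : seq 'rV[R]_d).

Lemma edist_ge0 x y : 0 <= edist x y.
Proof. exact: sqrtr_ge0. Qed.

Lemma edist_sqr x y : edist x y ^+ 2 = \sum_(i < d) (x ord0 i - y ord0 i) ^+ 2.
Proof. by rewrite sqr_sqrtr // sumr_ge0 // => i _; exact: sqr_ge0. Qed.

Lemma edistC x y : edist x y = edist y x.
Proof. by congr Num.sqrt; apply: eq_bigr => i _; rewrite -sqrrN opprB. Qed.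

Lemma edist_sqr_triangle x y z :
  edist x z ^+ 2 <= 2 * edist x y ^+ 2 + 2 * edist y z ^+ 2.
Proof.
rewrite !edist_sqr !mulr_sumr -big_split /=; apply: ler_sum => i _.
have := sqr_ge0 (x ord0 i + z ord0 i - 2 * y ord0 i); nra.
Qed.

Lemma Dist_attained C a : C != [::] -> exists2 c, c \in C & Dist C a = edist a c.
Proof.
move=> C0; have /mapP[c cC ->] : Dist C a \in [seq edist a c | c <- C].
  by apply: seqmin_mem; rewrite -size_eq0 size_map size_eq0.
by exists c.
Qed.

Lemma Dist_le C a c : c \in C -> Dist C a <= edist a c.
Proof. by move=> cC; apply/seqmin_le/map_f. Qed.

Lemma Dist_ge0 C a : C != [::] -> 0 <= Dist C a.
Proof. by move=> C0; have [c _ ->] := Dist_attained a C0; exact: edist_ge0. Qed.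

Lemma Dist_sqr_triangle C a0 a : C != [::] ->
  Dist C a0 ^+ 2 <= 2 * edist a a0 ^+ 2 + 2 * Dist C a ^+ 2.
Proof.
move=> C0; have [c cC ->] := Dist_attained a C0.
rewrite -(edistC a0 a); apply: le_trans (edist_sqr_triangle a0 a c).
by rewrite lerXn2r ?nnegrE ?Dist_ge0 ?edist_ge0 ?Dist_le.
Qed.

Lemma cost_ge0 A C : 0 <= cost A C.
Proof.
apply: sumr_ge0 => a _; case: C => [//|c C].
have /mapP[c' _ ->] := @seqmin_mem _ [seq edist a c ^+ 2 | c <- c :: C] isT.
exact: sqr_ge0.
Qed.

Lemma cost_cons_le_edist A C c : cost A (c :: C) <= \sum_(a <- A) edist a c ^+ 2.
Proof. by apply: ler_sum => a _; apply: seqmin_le; rewrite inE eqxx. Qed.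

Lemma cost_cons_le_Dist A C c : C != [::] ->
  cost A (c :: C) <= \sum_(a <- A) Dist C a ^+ 2.
Proof.
move=> C0; apply: ler_sum => a _; have [c' c'C ->] := Dist_attained a C0.
by apply: seqmin_le; rewrite inE (map_f (fun c => edist a c ^+ 2)) ?orbT.
Qed.

Lemma sum_edist_sqr A z : A != [::] ->
  \sum_(a <- A) edist a z ^+ 2 = OPT A + (size A)%:R * edist (centroid A) z ^+ 2.
Proof.
move=> A0; have n0 : (size A)%:R != 0 :> R by rewrite pnatr_eq0 size_eq0.
rewrite /OPT; under eq_bigr do rewrite edist_sqr.
under [X in X + _]eq_bigr do rewrite edist_sqr.
rewrite edist_sqr exchange_big [X in _ = X + _]exchange_big mulr_sumr -big_split /=.
apply: eq_bigr => i _; rewrite (sum_sqr_sub (fun a => a ord0 i)) //.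
by rewrite /centroid !mxE summxE.
Qed.

Lemma sum_pairwise_edist_sqr A : A != [::] ->
  \sum_(a0 <- A) \sum_(a <- A) edist a a0 ^+ 2 = 2 * (size A)%:R * OPT A.
Proof.
move=> A0; under eq_bigr do rewrite sum_edist_sqr //.
rewrite big_split /= sumr_const_seq -mulr_sumr.
under eq_bigr do rewrite edistC.
by rewrite -/(OPT A) -mulr_natr; ring.
Qed.

End Distances.

Section Inequalities.
Variable R : realFieldType.

Lemma approx_sqr_bounds (delta D t : R) : 0 <= D -> delta <= 2^-1 ->
  (1 - delta) * D <= t -> t <= (1 + delta) * D ->
  D ^+ 2 <= 4 * t ^+ 2 /\ 4 * t ^+ 2 <= 9 * D ^+ 2.
Proof.
move=> D0 delta_le lo hi.
have half : 2 * 2^-1 = 1 :> R by rewrite mulfV ?pnatr_eq0.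
have deltaD : delta * D <= 2^-1 * D by rewrite ler_wpM2r.
have lo' : D <= 2 * t by nra.
have hi' : 2 * t <= 3 * D by nra.
split; nra.
Qed.

(* With [x = Dt(a0)^2], [y = D(a0)^2], [c = cost(A, C ∪ {a0})], [P = P(a0)]. *)
Lemma contribution_le (n x y S T P c : R) :
  0 < n -> 0 <= x -> 4 * x <= 9 * y -> T <= 4 * S -> 0 < T ->
  n * y <= 2 * T + 2 * P -> 0 <= c -> c <= T -> c <= P ->
  x / S * c <= 36%:R / n * P.
Proof.
move=> n0 x0 xy TS T0 nyTP c0 cT cP.
have S0 : 0 < S by lra.
have weight : x / S <= 9 * y / T.
  rewrite ler_pdivrMr // mulrAC ler_pdivlMr //; nra.
have ync : n * (y * c) <= 4 * (T * P) by nra.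
apply: le_trans (ler_wpM2r c0 weight) _.
have -> : 9 * y / T * c = 9 / (n * T) * (n * (y * c)) by field; rewrite ?gt_eqF.
rewrite (_ : 36%:R / n * P = 9 / (n * T) * (4 * (T * P))); last by field; rewrite ?gt_eqF.
by rewrite ler_wpM2l // divr_ge0 ?mulr_ge0 ?ltW.
Qed.

End Inequalities.

Theorem mainTheorem5 (R : realType) (d : nat) (delta : R)
    (A C : seq 'rV[R]_d) (Dt : 'rV[R]_d -> R) :
  0 < delta -> delta <= 2^-1 ->
  uniq A -> A != [::] -> uniq C -> C != [::] ->
  (forall a, a \in A -> 0 <= Dt a) ->
  (forall a, a \in A ->
     (1 - delta) * Dist C a <= Dt a /\ Dt a <= (1 + delta) * Dist C a) ->
  0 < \sum_(a <- A) Dt a ^+ 2 ->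
  \sum_(a0 <- A) (Dt a0 ^+ 2 / \sum_(a <- A) Dt a ^+ 2) * cost A (a0 :: C)
    <= 72%:R * OPT A.
Proof.
move=> _ delta_le _ A0 _ C0 _ approx S0.
set S := \sum_(a <- A) Dt a ^+ 2 in S0 *; set T := \sum_(a <- A) Dist C a ^+ 2.
set n := (size A)%:R : R.
have n0 : 0 < n by rewrite ltr0n lt0n size_eq0.
have bounds a : a \in A -> Dist C a ^+ 2 <= 4 * Dt a ^+ 2 /\ 4 * Dt a ^+ 2 <= 9 * Dist C a ^+ 2.
  by move=> aA; have [lo hi] := approx a aA; exact: approx_sqr_bounds (Dist_ge0 a C0) _ lo hi.
have TS : T <= 4 * S.
  by rewrite /T /S mulr_sumr !big_seq; apply: ler_sum => a /bounds[].
have T0 : 0 < T.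
  have : 4 * S <= 9 * T by rewrite /T /S !mulr_sumr !big_seq; apply: ler_sum => a /bounds[].
  lra.
apply: (le_trans (y := \sum_(a0 <- A) 36%:R / n * \sum_(a <- A) edist a a0 ^+ 2)).
  rewrite !big_seq; apply: ler_sum => a0 a0A.
  apply: (contribution_le (y := Dist C a0 ^+ 2)) (cost_ge0 _ _)
           (cost_cons_le_Dist _ _ C0) (cost_cons_le_edist _ _ _) => //.
  - exact: sqr_ge0.
  - by have [] := bounds a0 a0A.
  - rewrite [n * _]mulr_natl -sumr_const_seq !mulr_sumr -big_split /=.
    by apply: ler_sum => a _; rewrite addrC; exact: Dist_sqr_triangle.
rewrite -mulr_sumr sum_pairwise_edist_sqr // -/n.
by rewrite (_ : 36%:R / n * _ = 72%:R * OPT A) //; field; rewrite gt_eqF.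
Qed.
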